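(* Let $X$ be an L-space and $U,V\in{\sf ClopUp}(X)$. (1) $\mathrm{core}\,U\subseteq\ker U\subseteq U$. (2) If $U\subseteq V$ then $\mathrm{core}\,U\subseteq\mathrm{core}\,V$. (3) If $X$ is an algebraic L-space, then $X$ is a continuous L-space. (4) $U$ is a Scott upset if and only if $\mathrm{core}\,U=U$.
   Context: A Priestley space is a Stone space $X$ with a partial order such that clopen upsets separate points. An L-space is a Priestley space in which the downset of each clopen set is clopen and the closure of each open upset is open. ${\sf ClopUp}(X)$ is the set of clopen upsets of $X$; $\mathrm{cl}$ denotes closure. The spatial part of $X$ is $Y=\{y\in X\mid{\downarrow}y\text{ is clopen}\}$. A Scott upset is a closed upset $F$ with $\min F\subseteq Y$; ${\sf ClopSUp}(X)$ is the set of clopen Scott upsets. For $U,V\in{\sf ClopUp}(X)$, write $V\ll U$ if for every open upset $W$ of $X$, $U\subseteq\mathrm{cl}\,W$ implies $V\subseteq W$. Define $\ker U=\bigcup\{V\in{\sf ClopUp}(X)\mid V\ll U\}$ and $\mathrm{core}\,U=\bigcup\{V\in{\sf ClopSUp}(X)\mid V\subseteq U\}$. $X$ is a continuous L-space if $\ker U$ is dense in $U$ for all $U\in{\sf ClopUp}(X)$, and an algebraic L-space if $\mathrm{core}\,U$ is dense in $U$ for all $U\in{\sf ClopUp}(X)$. *)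

From mathcomp Require Import all_boot all_order.
From mathcomp Require Import all_classical all_reals all_analysis.
Set Implicit Arguments. Unset Strict Implicit. Unset Printing Implicit Defensive.
Local Open Scope classical_set_scope.

Section PriestleyDefs.
Context {T : topologicalType} (le : T -> T -> Prop).

Definition partial_order : Prop :=
  [/\ (forall x, le x x),
      (forall x y, le x y -> le y x -> x = y) &
      (forall x y z, le x y -> le y z -> le x z)].

Definition upset (A : set T) : Prop := forall x y, A x -> le x y -> A y.

Definition downset (A : set T) : set T := [set x | exists2 y, A y & le x y].

Definition clopen_upset (A : set T) : Prop := clopen A /\ upset A.

Definition stone_space : Prop :=
  [/\ compact [set: T], hausdorff_space T & zero_dimensional T].

Definition priestley_space : Prop :=
  [/\ stone_space, partial_order &
      (forall x y, ~ le x y -> exists U, [/\ clopen_upset U, U x & ~ U y])].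

Definition L_space : Prop :=
  [/\ priestley_space,
      (forall A : set T, clopen A -> clopen (downset A)) &
      (forall W : set T, open W -> upset W -> open (closure W))].

Definition spatial_part : set T := [set y | clopen (downset [set y])].

Definition minimals (F : set T) : set T :=
  [set x | F x /\ forall y, F y -> le y x -> y = x].

Definition scott_upset (F : set T) : Prop :=
  [/\ closed F, upset F & minimals F `<=` spatial_part].

Definition clopen_scott_upset (F : set T) : Prop := clopen F /\ scott_upset F.

Definition way_below (V U : set T) : Prop :=
  forall W : set T, open W -> upset W -> U `<=` closure W -> V `<=` W.

Definition ker_up (U : set T) : set T :=
  [set x | exists2 V, clopen_upset V /\ way_below V U & V x].

Definition core_up (U : set T) : set T :=
  [set x | exists2 V, clopen_scott_upset V /\ V `<=` U & V x].

Definition dense_in (A B : set T) : Prop := B `<=` closure A.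

Definition continuous_L_space : Prop :=
  L_space /\ forall U, clopen_upset U -> dense_in (ker_up U) U.

Definition algebraic_L_space : Prop :=
  L_space /\ forall U, clopen_upset U -> dense_in (core_up U) U.

End PriestleyDefs.

From mathcomp Require Import all_boot all_order.
From mathcomp Require Import all_classical all_reals all_analysis.
Local Open Scope classical_set_scope.

(** Every point [v] of a closed set [F] of a Priestley space lies above a
   minimal point [m] of [F]: by compactness, chains in [F] have lower bounds,
   so Zorn's lemma applies.  If [m] is spatial, the clopen downset of [m] is a
   neighbourhood of [m], so [m \in cl W] forces some [w <= m] into the upset
   [W]; hence [m] and [v] lie in [W].  This makes every clopen Scott upset
   inside [U] way below [U], i.e. [core U] is contained in [ker U]. *)

Section Priestley.
Context {T : topologicalType} {le : T -> T -> Prop}.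
Hypothesis PS : priestley_space le.

Lemma closed_below (c : T) : closed [set x | le x c].
Proof.
have [_ _ sep] := PS; move=> p clp; apply: contrapT => npc.
have [U [[[oU _] uU] Up nUc]] := sep _ _ npc.
have /clp [w [/= lwc Uw]] : nbhs p U by apply: open_nbhs_nbhs.
by apply: nUc; apply: uU lwc.
Qed.

Lemma chain_lower_bound {F A : set T} : closed F -> A `<=` F ->
  A !=set0 -> total_on A le -> exists2 p, F p & forall a, A a -> le p a.
Proof.
move=> cF AF [a0 Aa0] Atot.
have [[cT _ _] [lerefl _ letrans] _] := PS.
pose B a := F `&` [set x | le x a].
have FB : ProperFilter (filter_from A B).
  apply: filter_from_proper => [|a Aa]; last first.
    by exists a; split; [apply: AF | apply: lerefl].
  apply: filter_from_filter; first by exists a0.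
  move=> a b Aa Ab; have [ab|ba] := Atot _ _ Aa Ab.
  - by exists a => // x [Fx xa]; do 2?split => //; apply: letrans xa ab.
  - by exists b => // x [Fx xb]; do 2?split => //; apply: letrans xb ba.
have [p [_ clp]] := cT _ FB filterT.
have Bp a : A a -> B a p.
  move=> Aa; apply: (closedI cF (closed_below a)) => N Np.
  by apply: clp => //; exists a.
by exists p => [|a /Bp []//]; have [] := Bp _ Aa0.
Qed.

Lemma minimal_below {F : set T} {y : T} : closed F -> F y ->
  exists2 m, minimals le F m & le m y.
Proof.
move=> cF Fy; have [_ [lerefl antisym letrans] _] := PS.
pose S := {x : T | F x /\ le x y}.
pose R (a b : S) := `[< le (sval b) (sval a) >].
have [t tmax] : exists t : S, forall s, R t s -> s = t.
  apply: (@Zorn S R) => [a | a b c /asboolP ab /asboolP bc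
                        | [a Pa] [b Pb] /asboolP ab /asboolP ba | A Atot].
  - exact/asboolP.
  - by apply/asboolP; apply: letrans ab.
  - by apply: eq_exist; apply: antisym.
  have [[a0 Aa0]|A0] := pselect (A !=set0); last first.
    by exists (exist _ y (conj Fy (lerefl y))) => s As; case: A0; exists s.
  have cFy : closed (F `&` [set x | le x y]) by exact: closedI cF (closed_below y).
  have AFy : sval @` A `<=` F `&` [set x | le x y].
    by move=> _ [a _ <-]; exact: (svalP a).
  have totA : total_on (sval @` A) le.
    move=> _ _ [a Aa <-] [b Ab <-].
    by have [/asboolP|/asboolP] := Atot _ _ Aa Ab; [right|left].
  have [|p [Fp py] pA] := chain_lower_bound cFy AFy _ totA.
    by exists (sval a0), a0.
  by exists (exist _ p (conj Fp py)) => s As; apply/asboolP/pA; exists s.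
have [Ft ty] := svalP t.
exists (sval t) => //; split => // z Fz zt.
have zy : le z y by apply: letrans zt ty.
by have := tmax (exist _ z (conj Fz zy)) (asboolT zt) => <-.
Qed.

Lemma scott_upset_way_below (F U : set T) :
  scott_upset le F -> F `<=` U -> way_below le F U.
Proof.
move=> [cF _ minF] FU W _ uW UW v Fv.
have [m [Fm minm] mv] := minimal_below cF Fv.
have [_ [lerefl _ _] _] := PS.
have [oD _] := minF m (conj Fm minm).
have /(UW m (FU _ Fm)) [w [Ww [_ -> wm]]] : nbhs m (downset le [set m]).
  by apply: open_nbhs_nbhs; split => //; exists m => //; exact: lerefl.
exact: uW (uW _ _ Ww wm) mv.
Qed.

Lemma core_up_sub_ker_up (U : set T) : core_up le U `<=` ker_up le U.
Proof.
move=> x [V [[cV sV] VU] Vx]; exists V => //.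
by split; [split => //; case: sV | exact: scott_upset_way_below].
Qed.

End Priestley.

Section CoreKer.
Context {T : topologicalType} (le : T -> T -> Prop).

Lemma ker_up_sub (U : set T) : open U -> upset le U -> ker_up le U `<=` U.
Proof.
by move=> oU uU x [V [_ VU] Vx]; apply: (VU U) => //; exact: subset_closure.
Qed.

Lemma core_up_sub (U : set T) : core_up le U `<=` U.
Proof. by move=> x [V [_ VU] Vx]; exact: VU. Qed.

Lemma core_upS (U V : set T) : U `<=` V -> core_up le U `<=` core_up le V.
Proof. by move=> UV x [W [sW WU] Wx]; exists W => //; split => // z /WU /UV. Qed.

Lemma scott_upsetE (U : set T) : clopen_upset le U ->
  scott_upset le U <-> core_up le U = U.
Proof.
move=> [[oU cU] uU]; split => [sU|eU].
  apply/seteqP; split; first exact: core_up_sub.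
  by move=> x Ux; exists U => //; split; first split.
split => // m [Um minm]; move: (Um); rewrite -eU => -[V [[_ [_ _ minV]] VU] Vm].
by apply: minV; split => // z Vz zm; apply: minm => //; exact: VU.
Qed.

Lemma algebraic_continuous_L_space :
  algebraic_L_space le -> continuous_L_space le.
Proof.
move=> [LS alg]; have [PS _ _] := LS; split => // U cU x /(alg U cU).
exact/closureS/(core_up_sub_ker_up PS).
Qed.

End CoreKer.

Theorem lemma4p2 (T : topologicalType) (le : T -> T -> Prop) :
  L_space le ->
  [/\ (forall U : set T, clopen_upset le U ->
         core_up le U `<=` ker_up le U /\ ker_up le U `<=` U),
      (forall U V : set T, clopen_upset le U -> clopen_upset le V ->
         U `<=` V -> core_up le U `<=` core_up le V),
      (algebraic_L_space le -> continuous_L_space le) &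
      (forall U : set T, clopen_upset le U ->
         (scott_upset le U <-> core_up le U = U))].
Proof.
move=> [PS _ _]; split.
- move=> U [[oU _] uU]; split; first exact: (@core_up_sub_ker_up _ le PS U).
  exact: ker_up_sub.
- by move=> U V _ _; exact: core_upS.
- exact: algebraic_continuous_L_space.
- exact: scott_upsetE.
Qed.
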